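(* Let $n\ge 2$ and $0\le r_u<1$. For all $x,y\in\mathbb{B}^n$ such that $0\le |x|\le |y|\le r_u$, $$\frac12\,\mathrm{th}\frac{\rho_{\mathbb{B}^n}(x,y)}{2}\le t_{\mathbb{B}^n}(x,y)\le \frac{1+r_u}{2}\,\mathrm{th}\frac{\rho_{\mathbb{B}^n}(x,y)}{2},$$ and the constant $(1+r_u)/2$ in the upper bound is the best possible constant depending only on $r_u$.
   Context: $\mathbb{B}^n=\{x\in\mathbb{R}^n:|x|<1\}$ is the unit ball. For a domain $G\subsetneq\mathbb{R}^n$ and $x\in G$, $d_G(x)=\inf\{|x-z|:z\in\partial G\}$. The hyperbolic metric of the unit ball is given by $\mathrm{sh}^2\frac{\rho_{\mathbb{B}^n}(x,y)}{2}=\frac{|x-y|^2}{(1-|x|^2)(1-|y|^2)}$; equivalently $\mathrm{th}\frac{\rho_{\mathbb{B}^n}(x,y)}{2}=\frac{|x-y|}{\sqrt{|x-y|^2+(1-|x|^2)(1-|y|^2)}}$. The $t$-metric of a domain $G$ is $t_G(x,y)=\frac{|x-y|}{|x-y|+d_G(x)+d_G(y)}$. *)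

From HB Require Import structures.
From mathcomp Require Import all_boot all_order all_algebra.
From mathcomp Require Import all_classical all_reals all_analysis.
Set Implicit Arguments. Unset Strict Implicit. Unset Printing Implicit Defensive.
Import Order.TTheory GRing.Theory Num.Theory.
Import numFieldNormedType.Exports.
Local Open Scope classical_set_scope.
Local Open Scope ring_scope.

Definition enorm {R : realType} {n : nat} (x : 'rV[R]_n) : R :=
  Num.sqrt (\sum_(i < n) (x 0 i) ^+ 2).

Definition unit_ball {R : realType} (n : nat) : set 'rV[R]_n :=
  [set x | enorm x < 1].

Definition dist_bd {R : realType} {n : nat} (G : set 'rV[R]_n) (x : 'rV[R]_n) : R :=
  inf [set enorm (x - z) | z in closure G `\` interior G].

Definition tmetric {R : realType} {n : nat} (G : set 'rV[R]_n) (x y : 'rV[R]_n) : R :=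
  enorm (x - y) / (enorm (x - y) + dist_bd G x + dist_bd G y).

Definition arsinh {R : realType} (s : R) : R := ln (s + Num.sqrt (s ^+ 2 + 1)).
Definition th {R : realType} (z : R) : R :=
  (expR z - expR (- z)) / (expR z + expR (- z)).

(* hyperbolic metric of the unit ball: sh^2(rho/2) = |x-y|^2/((1-|x|^2)(1-|y|^2)) *)
Definition rho_ball {R : realType} {n : nat} (x y : 'rV[R]_n) : R :=
  2 * arsinh (enorm (x - y) / Num.sqrt ((1 - enorm x ^+ 2) * (1 - enorm y ^+ 2))).

From HB Require Import structures.
From mathcomp Require Import all_boot all_order all_algebra.
From mathcomp Require Import all_classical all_reals all_analysis.
From mathcomp Require Import ring lra.
Import Order.TTheory GRing.Theory Num.Theory.
Import numFieldNormedType.Exports.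
Local Open Scope classical_set_scope.
Local Open Scope ring_scope.

(* For x, y in the ball write a = |x|, b = |y|, d = |x - y|.  Since the
   boundary of the ball is the unit sphere, d_B(x) = 1 - |x|, so
     t(x, y)          = d / (d + (1 - a) + (1 - b)),
     th (rho(x,y)/2)  = d / sqrt (d^2 + (1 - a^2) (1 - b^2)),
   and the theorem becomes a statement about three reals constrained by the
   triangle inequalities b - a <= d <= a + b.  Writing D = d + (1-a) + (1-b)
   and Q = d^2 + (1-a^2)(1-b^2), both bounds follow from the polynomial
   inequalities  D^2 <= 4 Q <= ((1 + b) D)^2  (a quadratic case analysis in d).
   Sharpness: for two points of the sphere of radius r at distance 2q the
   ratio t/th tends to (1 + r)/2 as q -> 0. *)

(* Lower comparison D^2 <= 4 Q: with s = d - (b - a) in [0, 2a] the difference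
   is a parabola in s, bounded below according to the position of its vertex. *)
Lemma t_denominator_le (R : realFieldType) (a b d : R) :
  0 <= a -> a <= b -> b < 1 -> b - a <= d -> d <= a + b ->
  (d + (1 - a) + (1 - b)) ^+ 2 <= 4 * (d ^+ 2 + (1 - a ^+ 2) * (1 - b ^+ 2)).
Proof.
move=> a0 ab b1 lo hi.
set s := d - (b - a); set w := 1 + a - 2 * b.
set C := 4 * a * (1 - b) * (2 - a - a * b).
have s0 : 0 <= s by rewrite /s; lra.
have s2a : s <= 2 * a by rewrite /s; lra.
have C0 : 0 <= C by rewrite /C !mulr_ge0 //; nra.
rewrite -subr_ge0.
have -> : 4 * (d ^+ 2 + (1 - a ^+ 2) * (1 - b ^+ 2)) - (d + (1 - a) + (1 - b)) ^+ 2
    = 3 * s ^+ 2 - 4 * w * s + C by rewrite /s /w /C; ring.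
have [w_le0|w_pos] := lerP w 0.
  (* no negative term *)
  have : 0 <= - w * s by rewrite mulr_ge0 //; lra.
  have := sqr_ge0 s; lra.
have [w_le3a|w_gt3a] := lerP w (3 * a).
- (* the vertex 2w/3 of the parabola lies in [0, 2a]; bound its value *)
  have w_le : w <= 6 * a * (1 - a).
    have w1a : w <= 1 - a by rewrite /w; lra.
    have [a_small|a_large] := lerP a (1/2).
    + have : 0 <= a * (1 - 2 * a) by rewrite mulr_ge0 //; lra.
      lra.
    + have : 0 <= (1 - a) * (2 * a - 1) by rewrite mulr_ge0 //; lra.
      lra.
  have w_sq : w ^+ 2 <= 6 * a * (1 - a) * (1 - b).
    have w1b : w <= 1 - b by rewrite /w; lra.
    have : 0 <= w * (1 - b - w) by rewrite mulr_ge0 //; lra.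
    have : 0 <= (1 - b) * (6 * a * (1 - a) - w) by rewrite mulr_ge0 //; lra.
    nra.
  have : 3 * C - 4 * w ^+ 2 >= 0.
    have : 0 <= a ^+ 2 * (1 - b) ^+ 2 by rewrite mulr_ge0 ?sqr_ge0.
    rewrite /C; nra.
  have := sqr_ge0 (3 * s - 2 * w); nra.
- (* the parabola decreases on [0, 2a]: compare with its value at s = 2a *)
  have dec : 0 <= (2 * a - s) * (4 * w - 3 * s - 6 * a) by apply: mulr_ge0; lra.
  have end2a : 0 <= a * (2 * b + a * b ^+ 2) by rewrite !mulr_ge0 //; nra.
  rewrite /w /C in dec *; nra.
Qed.

(* Upper comparison 4 Q <= ((1 + b) D)^2: the difference is concave in d and
   nonnegative at both ends d = b - a and d = a + b of the admissible range. *)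
Lemma t_denominator_ge (R : realFieldType) (a b d : R) :
  0 <= a -> a <= b -> b < 1 -> b - a <= d -> d <= a + b ->
  4 * (d ^+ 2 + (1 - a ^+ 2) * (1 - b ^+ 2)) <= ((1 + b) * (d + (1 - a) + (1 - b))) ^+ 2.
Proof.
move=> a0 ab b1 lo hi; rewrite -subr_ge0.
set V := fun e : R => ((1 + b) * (e + (1 - a) + (1 - b))) ^+ 2
                      - 4 * (e ^+ 2 + (1 - a ^+ 2) * (1 - b ^+ 2)).
change (0 <= V d).
have V_lo : 0 <= V (b - a).
  have -> : V (b - a) = 4 * (b - a) * (2 * (1 - a) * (1 + b) - (b - a)) by rewrite /V; ring.
  by rewrite mulr_ge0 // ?mulr_ge0 //; nra.
have V_hi : 0 <= V (a + b).
  have -> : V (a + b) = 4 * (1 - a) * (2 * b + (1 + a) * b ^+ 2) by rewrite /V; ring.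
  by rewrite !mulr_ge0 //; nra.
have [a_eq0 | a_pos] := eqVneq a 0.
  by have -> : d = b - a by lra.
have {}a_pos : 0 < a by rewrite lt_neqAle eq_sym a_pos.
(* V is concave, so on [b - a, a + b] it lies above its chord *)
have chord : 2 * a * V d = (a + b - d) * V (b - a) + (d - (b - a)) * V (a + b)
    + 2 * a * (4 - (1 + b) ^+ 2) * ((d - (b - a)) * (a + b - d)) by rewrite /V; ring.
have : 0 <= 2 * a * V d.
  rewrite chord; apply: addr_ge0; first by apply: addr_ge0; apply: mulr_ge0; lra.
  by rewrite !mulr_ge0 //; nra.
by rewrite pmulr_rge0 // mulr_gt0.
Qed.

Lemma t_th_bounds (R : rcfType) (a b d r : R) :
  0 <= a -> a <= b -> b <= r -> r < 1 -> b - a <= d -> d <= a + b ->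
  2^-1 * (d / Num.sqrt (d ^+ 2 + (1 - a ^+ 2) * (1 - b ^+ 2)))
    <= d / (d + (1 - a) + (1 - b)) /\
  d / (d + (1 - a) + (1 - b))
    <= (1 + r) / 2 * (d / Num.sqrt (d ^+ 2 + (1 - a ^+ 2) * (1 - b ^+ 2))).
Proof.
move=> a0 ab br r1 lo hi; have b1 : b < 1 by apply: le_lt_trans br r1.
set D := d + (1 - a) + (1 - b); set Q := d ^+ 2 + (1 - a ^+ 2) * (1 - b ^+ 2).
have d0 : 0 <= d by lra.
have D_pos : 0 < D by rewrite /D; lra.
have Q0 : 0 <= Q by rewrite addr_ge0 ?sqr_ge0 // mulr_ge0 //; nra.
set S := 2 * Num.sqrt Q.
have S2 : S ^+ 2 = 4 * Q by rewrite exprMn sqr_sqrtr //; congr (_ * _); rewrite expr2; lra.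
have S0 : 0 <= S by rewrite mulr_ge0 ?sqrtr_ge0.
have D_le_S : D <= S.
  by rewrite -ler_sqr ?nnegrE ?(ltW D_pos) // S2 t_denominator_le.
have S_le : S <= (1 + b) * D.
  rewrite -ler_sqr ?nnegrE // ?mulr_ge0 ?(ltW D_pos) //; last by lra.
  by rewrite S2 t_denominator_ge.
have S_pos : 0 < S by apply: lt_le_trans D_le_S.
have sQ_neq0 : Num.sqrt Q != 0 by apply: lt0r_neq0; rewrite /S in S_pos; lra.
have -> : 2^-1 * (d / Num.sqrt Q) = d / S by rewrite /S; field.
have -> : (1 + r) / 2 * (d / Num.sqrt Q) = (1 + r) * (d / S) by rewrite /S; field.
split; first by rewrite ler_wpM2l // lef_pV2.
have -> : d / D = (1 + b) * (d / ((1 + b) * D)).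
  by field; apply/andP; split; apply: lt0r_neq0; lra.
apply: ler_pM; [lra | by rewrite mulr_ge0 // invr_ge0 mulr_ge0 //; lra | lra |].
by rewrite ler_wpM2l // lef_pV2 // posrE mulr_gt0 //; lra.
Qed.

Lemma t_th_ratio_sharp (R : rcfType) (r c : R) :
  0 < r -> r < 1 -> c < (1 + r) / 2 ->
  exists2 q : R, 0 < q <= r &
    c * (2 * q / Num.sqrt ((2 * q) ^+ 2 + (1 - r ^+ 2) * (1 - r ^+ 2)))
      < 2 * q / (2 * q + (1 - r) + (1 - r)).
Proof.
move=> r0 r1 cr.
(* the slack in 2c(1 - r) < 1 - r^2 absorbs the term 2cq for small q *)
set eps := (1 - r ^+ 2) - 2 * c * (1 - r).
have eps0 : 0 < eps by rewrite /eps; nra.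
have c1 : 0 < 4 * (`|c| + 1) by have := normr_ge0 c; lra.
set q := Num.min r (eps / (4 * (`|c| + 1))).
have q0 : 0 < q by rewrite lt_min r0 divr_gt0.
have q_eps : q * (4 * (`|c| + 1)) <= eps by rewrite -ler_pdivlMr // ge_min lexx orbT.
exists q; first by rewrite q0 ge_min lexx.
set D := 2 * q + (1 - r) + (1 - r).
set sQ := Num.sqrt _.
have D_pos : 0 < D by rewrite /D; lra.
have r2 : 0 < 1 - r ^+ 2 by nra.
have sQ_ge : 1 - r ^+ 2 <= sQ.
  rewrite -ler_sqr ?nnegrE ?sqrtr_ge0 ?(ltW r2) // sqr_sqrtr.
    by rewrite expr2 lerDr sqr_ge0.
  by rewrite addr_ge0 ?sqr_ge0 // mulr_ge0 // ltW.
have sQ_pos : 0 < sQ by apply: lt_le_trans sQ_ge.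
have cD : c * D < sQ.
  apply: lt_le_trans sQ_ge; have [c_le0|c_pos] := lerP c 0.
    have : c * D <= 0 by rewrite mulr_le0_ge0 //; lra.
    lra.
  by move: q_eps; rewrite gtr0_norm // /D /eps; nra.
rewrite -subr_gt0.
have -> : 2 * q / D - c * (2 * q / sQ) = 2 * q / (D * sQ) * (sQ - c * D).
  by field; apply/andP; split; rewrite gt_eqF.
by rewrite mulr_gt0 ?divr_gt0 ?mulr_gt0 // subr_gt0.
Qed.

Section HyperbolicTangent.
Context {R : realType}.

(* th (arsinh s) = sh/ch evaluated at ch = sqrt (s^2 + 1) *)
Lemma th_arsinh (s : R) : th (arsinh s) = s / Num.sqrt (s ^+ 2 + 1).
Proof.
set q := Num.sqrt (s ^+ 2 + 1).
have q_pos : 0 < q by rewrite sqrtr_gt0; have := sqr_ge0 s; lra.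
have qq : q ^+ 2 = s ^+ 2 + 1 by rewrite sqr_sqrtr // addr_ge0 ?sqr_ge0.
have s_lt_q : `|s| < q.
  by rewrite -ltr_sqr ?nnegrE ?normr_ge0 ?(ltW q_pos) // qq real_normK ?num_real //; lra.
move: s_lt_q; rewrite ltr_norml => /andP [lo hi].
have sq_pos : 0 < s + q by lra.
have expE : expR (arsinh s) = s + q by rewrite /arsinh lnK // posrE.
have invE : (s + q)^-1 = q - s.
  by apply: (@mulfI _ (s + q)); rewrite ?mulfV ?gt_eqF //; nra.
rewrite /th expRN expE invE; field.
by rewrite !gt_eqF //; lra.
Qed.

Lemma th_half_rho (d P : R) : 0 <= d -> 0 < P ->
  th (2 * arsinh (d / Num.sqrt P) / 2) = d / Num.sqrt (d ^+ 2 + P).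
Proof.
move=> d0 P_pos; rewrite mulrC mulKf // th_arsinh.
have sP_pos : 0 < Num.sqrt P by rewrite sqrtr_gt0.
have sh2 : (d / Num.sqrt P) ^+ 2 + 1 = (Num.sqrt (d ^+ 2 + P) / Num.sqrt P) ^+ 2.
  rewrite !expr_div_n !sqr_sqrtr ?(ltW P_pos) ?addr_ge0 ?sqr_ge0 ?(ltW P_pos) //.
  by field; rewrite gt_eqF.
rewrite sh2 sqrtr_sqr ger0_norm ?divr_ge0 ?sqrtr_ge0 ?(ltW sP_pos) //.
have sQ_pos : 0 < Num.sqrt (d ^+ 2 + P) by rewrite sqrtr_gt0; have := sqr_ge0 d; lra.
by field; rewrite !gt_eqF.
Qed.

End HyperbolicTangent.

Section EuclideanNorm.
Context {R : realType} {n : nat}.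
Implicit Types (x y : 'rV[R]_n) (i j : 'I_n).

Lemma sumsq_ge0 x : 0 <= \sum_(i < n) x 0 i ^+ 2.
Proof. by apply: sumr_ge0 => i _; exact: sqr_ge0. Qed.

Lemma enorm_ge0 x : 0 <= enorm x.
Proof. exact: sqrtr_ge0. Qed.

Lemma enormN x : enorm (- x) = enorm x.
Proof. by rewrite /enorm; under eq_bigr do rewrite mxE sqrrN. Qed.

Lemma enormC x y : enorm (x - y) = enorm (y - x).
Proof. by rewrite -opprB enormN. Qed.

Lemma enormZ (k : R) x : enorm (k *: x) = `|k| * enorm x.
Proof.
rewrite /enorm; under eq_bigr do rewrite mxE exprMn.
by rewrite -mulr_sumr sqrtrM ?sqr_ge0 // sqrtr_sqr.
Qed.

(* Cauchy-Schwarz, from the nonnegativity of sum_i (B x_i - C y_i)^2 = B (A B - C^2) *)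
Lemma cauchy_schwarz x y :
  (\sum_(i < n) x 0 i * y 0 i) ^+ 2
    <= (\sum_(i < n) x 0 i ^+ 2) * (\sum_(i < n) y 0 i ^+ 2).
Proof.
set C := \sum_(i < n) _ * _; set A := \sum_(i < n) _ ^+ 2; set B := \sum_(i < n) _ ^+ 2.
have [B_eq0 | B_neq0] := eqVneq B 0.
  have y0 i : y 0 i = 0.
    apply/eqP; rewrite -sqrf_eq0; move/eqP: B_eq0.
    rewrite psumr_eq0 => [/allP/(_ i (mem_index_enum _))/implyP/(_ isT)//|j _].
    exact: sqr_ge0.
  by rewrite /C big1 ?B_eq0 ?expr0n ?mulr0 // => i _; rewrite y0 mulr0.
have B_pos : 0 < B by rewrite lt_neqAle eq_sym B_neq0 sumsq_ge0.
have expand : \sum_(i < n) (B * x 0 i - C * y 0 i) ^+ 2 = B * (A * B - C ^+ 2).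
  transitivity (\sum_(i < n) (B ^+ 2 * x 0 i ^+ 2 - (2 * B * C) * (x 0 i * y 0 i)
                              + C ^+ 2 * y 0 i ^+ 2)).
    by apply: eq_bigr => i _; ring.
  by rewrite big_split /= sumrB -!mulr_sumr -/A -/B -/C; ring.
have : 0 <= B * (A * B - C ^+ 2).
  by rewrite -expand; apply: sumr_ge0 => i _; exact: sqr_ge0.
by rewrite pmulr_rge0 // subr_ge0 mulrC.
Qed.

Lemma enorm_triangle x y : enorm (x + y) <= enorm x + enorm y.
Proof.
rewrite -ler_sqr ?nnegrE ?addr_ge0 ?enorm_ge0 // sqrrD /enorm !sqr_sqrtr ?sumsq_ge0 //.
have -> : \sum_(i < n) (x + y) 0 i ^+ 2 = \sum_(i < n) x 0 i ^+ 2
    + 2 * \sum_(i < n) x 0 i * y 0 i + \sum_(i < n) y 0 i ^+ 2.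
  by rewrite mulr_sumr -!big_split /=; apply: eq_bigr => i _; rewrite mxE; ring.
rewrite -sqrtrM ?sumsq_ge0 // lerD2r lerD2l mulr_natl lerMn2r /=.
apply: le_trans (ler_norm _) _.
by rewrite -sqrtr_sqr ler_sqrt ?mulr_ge0 ?sumsq_ge0 // cauchy_schwarz.
Qed.

Lemma enorm_reverse_triangle x y : enorm x - enorm y <= enorm (x - y).
Proof. by have := enorm_triangle (x - y) y; rewrite subrK lerBlDr. Qed.

Lemma enorm_delta i : enorm (delta_mx 0 i : 'rV[R]_n) = 1.
Proof.
rewrite /enorm (bigD1 i) //= big1 => [|k /negbTE k_neq_i]; last by rewrite mxE k_neq_i expr0n.
by rewrite mxE !eqxx expr1n addr0 sqrtr1.
Qed.

Lemma enorm_plane i j (al be : R) : i != j ->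
  enorm (al *: delta_mx 0 i + be *: delta_mx 0 j : 'rV[R]_n) = Num.sqrt (al ^+ 2 + be ^+ 2).
Proof.
move=> /negbTE i_neq_j; rewrite /enorm (bigD1 i) //= (bigD1 j) /=; last by rewrite eq_sym i_neq_j.
rewrite big1 => [|k /andP [/negbTE k_neq_i /negbTE k_neq_j]]; last first.
  by rewrite !mxE k_neq_i k_neq_j !mulr0 addr0 expr0n.
by rewrite !mxE [j == i]eq_sym i_neq_j !eqxx /= !mulr1 !mulr0 addr0 add0r addr0.
Qed.

End EuclideanNorm.

Section UnitBall.
Context {R : realType} {n : nat}.
Implicit Types x y z : 'rV[R]_n.

Lemma enorm_continuous : continuous (@enorm R n).
Proof.
move=> x; apply: (@continuous_comp _ _ _ (fun x : 'rV[R]_n => \sum_(i < n) x 0 i ^+ 2));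
  last exact: sqrt_continuous.
apply: continuous_big => [|i _ y]; first exact: add_continuous.
apply: (@continuous_comp _ _ _ (fun x : 'rV[R]_n => x 0 i) (fun t : R => t ^+ 2)).
  exact: coord_continuous.
exact: exprn_continuous.
Qed.

Lemma unit_ball_open : open (@unit_ball R n).
Proof.
rewrite (_ : @unit_ball R n = enorm @^-1` [set t : R | t < 1]) //.
apply: open_comp; last exact: open_lt.
by move=> x _; exact: enorm_continuous.
Qed.

Lemma unit_ball_boundary :
  closure (@unit_ball R n) `\` interior (@unit_ball R n) = [set z | enorm z = 1].
Proof.
rewrite (interior_id _).1; last exact: unit_ball_open.
apply/seteqP; split => z.
  move=> [z_cl z_out]; have z_ge1 : 1 <= enorm z by rewrite leNgt; apply/negP.
  apply/eqP; rewrite eq_le z_ge1 andbT.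
  have closed_le1 : closed (enorm @^-1` [set t : R | t <= 1] : set 'rV[R]_n).
    by apply: preimage_closed; [move=> x _; exact: enorm_continuous | exact: closed_le].
  have ball_le1 : @unit_ball R n `<=` enorm @^-1` [set t : R | t <= 1] by move=> x /ltW.
  by move: (closureS ball_le1 z_cl); rewrite -((closure_id _).1 closed_le1).
move=> /= z1; split; last by rewrite /unit_ball /= z1 ltxx.
(* the points t z, t < 1 close to 1, lie in the ball and approach z *)
move=> B; rewrite -[z]scale1r => /scalel_continuous [e e0 eB].
set t := 1 - Num.min e 1 / 2.
have m0 : 0 < Num.min e 1 by rewrite lt_min e0 ltr01.
have m1 : Num.min e 1 <= 1 by rewrite ge_min lexx orbT.
have me : Num.min e 1 <= e by rewrite ge_min lexx.
exists (t *: z); split.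
  by rewrite /unit_ball /= enormZ z1 mulr1 ger0_norm /t; lra.
by apply: eB; rewrite /ball_ /= /t opprB addrC subrK ger0_norm; lra.
Qed.

(* the radial projection of x onto the sphere realizes the distance 1 - |x| *)
Lemma sphere_nearest_point x : (0 < n)%N -> enorm x < 1 ->
  exists2 z, enorm z = 1 & enorm (x - z) = 1 - enorm x.
Proof.
move=> n_pos x1; have [x0 | x_neq0] := eqVneq (enorm x) 0.
  pose e : 'rV[R]_n := delta_mx 0 (Ordinal n_pos).
  exists e; first exact: enorm_delta.
  have := enorm_reverse_triangle e x; have := enorm_triangle x (- e).
  rewrite enormN enorm_delta x0 subr0 add0r [enorm (e - x)]enormC => le1 ge1.
  by apply/eqP; rewrite eq_le le1 ge1.
have x_pos : 0 < enorm x by rewrite lt_neqAle eq_sym x_neq0 enorm_ge0.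
exists ((enorm x)^-1 *: x).
  by rewrite enormZ ger0_norm ?invr_ge0 ?enorm_ge0 // mulVf.
rewrite -{1}[x]scale1r -scalerBl enormZ ler0_norm; last first.
  by rewrite subr_le0 invf_ge1 // ltW.
by rewrite opprB mulrBl mulVf // mul1r.
Qed.

Lemma dist_bd_unit_ball x : (0 < n)%N -> enorm x < 1 ->
  dist_bd (@unit_ball R n) x = 1 - enorm x.
Proof.
move=> n_pos x1; rewrite /dist_bd unit_ball_boundary.
set S := [set _ | _ in _].
have S_lb : lbound S (1 - enorm x).
  move=> _ [z /= z1 <-]; rewrite -z1 enormC; exact: enorm_reverse_triangle.
have [z z1 xz] := sphere_nearest_point x n_pos x1.
have S_min : S (1 - enorm x) by exists z.
apply/eqP; rewrite eq_le ge_inf //=; last by exists (1 - enorm x).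
by apply: lb_le_inf => //; exists (1 - enorm x).
Qed.

Lemma tmetric_unit_ball x y : (0 < n)%N -> enorm x < 1 -> enorm y < 1 ->
  tmetric (@unit_ball R n) x y
    = enorm (x - y) / (enorm (x - y) + (1 - enorm x) + (1 - enorm y)).
Proof. by move=> n_pos x1 y1; rewrite /tmetric !dist_bd_unit_ball. Qed.

Lemma th_half_rho_ball x y : enorm x < 1 -> enorm y < 1 ->
  th (rho_ball x y / 2)
    = enorm (x - y) / Num.sqrt (enorm (x - y) ^+ 2 + (1 - enorm x ^+ 2) * (1 - enorm y ^+ 2)).
Proof.
move=> x1 y1; rewrite /rho_ball th_half_rho ?enorm_ge0 //.
have sq_lt1 z : enorm z < 1 -> 0 < 1 - enorm z ^+ 2.
  by move=> z1; rewrite subr_gt0 expr_lt1 ?enorm_ge0.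
by rewrite mulr_gt0 ?sq_lt1.
Qed.

End UnitBall.

Theorem theorem3p2 (R : realType) (n : nat) (ru : R) :
  (2 <= n)%N -> 0 <= ru -> ru < 1 ->
  (forall x y : 'rV[R]_n,
      enorm x <= enorm y -> enorm y <= ru ->
      2^-1 * th (rho_ball x y / 2) <= tmetric (@unit_ball R n) x y /\
      tmetric (@unit_ball R n) x y <= (1 + ru) / 2 * th (rho_ball x y / 2)) /\
  (0 < ru -> forall c : R, c < (1 + ru) / 2 ->
     exists x y : 'rV[R]_n,
       [/\ enorm x <= enorm y, enorm y <= ru &
           c * th (rho_ball x y / 2) < tmetric (@unit_ball R n) x y]).
Proof.
move=> n2 ru0 ru1; have n_pos : (0 < n)%N by apply: leq_trans n2.
split => [x y xy y_ru | ru_pos c c_lt].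
  have y1 : enorm y < 1 by apply: le_lt_trans y_ru ru1.
  have x1 : enorm x < 1 by apply: le_lt_trans xy y1.
  rewrite tmetric_unit_ball // th_half_rho_ball //.
  apply: t_th_bounds => //; first exact: enorm_ge0.
    by rewrite enormC enorm_reverse_triangle.
  by have := enorm_triangle x (- y); rewrite enormN.
(* sharpness: two points of the sphere of radius ru, symmetric and close *)
have [q /andP [q_pos q_ru] ratio] := @t_th_ratio_sharp R ru c ru_pos ru1 c_lt.
pose e (i : 'I_n) : 'rV[R]_n := delta_mx 0 i.
pose i0 : 'I_n := Ordinal n_pos; pose i1 : 'I_n := Ordinal n2.
pose p := Num.sqrt (ru ^+ 2 - q ^+ 2).
have on_sphere s : s ^+ 2 = q ^+ 2 -> enorm (p *: e i0 + s *: e i1) = ru.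
  move=> s2; rewrite enorm_plane // s2 sqr_sqrtr ?subrK ?sqrtr_sqr ?ger0_norm //.
  by rewrite subr_ge0 ler_pXn2r ?nnegrE // ltW.
pose x := p *: e i0 + q *: e i1; pose y := p *: e i0 + (- q) *: e i1.
have [x_ru y_ru] : enorm x = ru /\ enorm y = ru by rewrite !on_sphere ?sqrrN.
have xy_dist : enorm (x - y) = 2 * q.
  rewrite /x /y opprD addrACA subrr add0r scaleNr opprK -scalerDl enormZ enorm_delta.
  by rewrite mulr1 ger0_norm; lra.
exists x, y; rewrite x_ru y_ru; split => //.
by rewrite tmetric_unit_ball ?th_half_rho_ball ?x_ru ?y_ru ?xy_dist.
Qed.
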